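(* Let $n=p_1p_2$, where $p_1,p_2$ are distinct primes. For $i=1,2$ let $s_i,t_i$ be positive integers with $s_it_i=p_i-1$ and let $g_i$ be a generator of $\mathbb{Z}_{p_i}^\times$. Let $d=\gcd(s_1,s_2)$. Let $e$ be an integer satisfying $$e\equiv g_1^{t_1}\pmod{p_1},\qquad e\equiv g_2^{t_2}\pmod{p_2},$$ and let $G=\langle e\rangle$ be the subgroup of $\mathbb{Z}_n^\times$ generated by $e$. Then the coset index function $f_G$ is a $(p_1p_2,\ 1+t_1+t_2+dt_1t_2,\ \{a_0,a_1,a_2\})$ zero-difference function, where $$a_0=\frac{1}{d}(s_1s_2-s_1-s_2)+1,\qquad a_1=\frac{(p_1-1)s_2}{d}-p_1+s_2,\qquad a_2=\frac{(p_2-1)s_1}{d}-p_2+s_1.$$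
   Context: For a subgroup $G$ of $\mathbb{Z}_n^\times$ and $r\in\mathbb{Z}_n$, the coset $rG=\{rg\mid g\in G\}$; these cosets partition $\mathbb{Z}_n$, forming a set $D_G$. The coset index function induced by $G$ is $f_G:\mathbb{Z}_n\to\mathbb{Z}_{|D_G|}$, $f_G(x)=h_G(C_x)$, where $C_x$ is the coset containing $x$ and $h_G:D_G\to\mathbb{Z}_{|D_G|}$ is a fixed bijection. A function $f:A\to B$ between finite abelian groups is an $(n,m,S)$ zero-difference function if $n=|A|$, $m=|f(A)|$, and for every nonzero $a\in A$, $|\{x\in A\mid f(x+a)=f(x)\}|\in S$. Here $A=(\mathbb{Z}_n,+)$. *)

From HB Require Import structures.
From mathcomp Require Import all_boot all_order all_fingroup all_algebra.
Set Implicit Arguments. Unset Strict Implicit. Unset Printing Implicit Defensive.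
Import GRing.Theory.
Local Open Scope ring_scope.

Definition zero_difference (A B : finZmodType) (f : A -> B)
    (n m : nat) (S : pred nat) : Prop :=
  [/\ #|A| = n, #|[set f x | x : A]| = m &
      forall a : A, a != 0 -> S #|[set x : A | f (x + a) == f x]|].

(* The element x of Z_n viewed in Z_n^x (x must be a unit; default 1). *)
Definition unit_of (n : nat) (x : 'Z_n) : {unit 'Z_n} := insubd (1%g : {unit 'Z_n}) x.

Definition gen_units (n : nat) (x : 'Z_n) : {group {unit 'Z_n}} :=
  <[unit_of x]>%G.

Definition zcoset (n : nat) (G : {set {unit 'Z_n}}) (r : 'Z_n) : {set 'Z_n} :=
  [set r * val g | g in G].

Definition zcosets (n : nat) (G : {set {unit 'Z_n}}) : {set {set 'Z_n}} :=
  [set zcoset G r | r : 'Z_n].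

Definition coset_index_fun (n : nat) (G : {set {unit 'Z_n}}) (B : Type)
    (h : {set 'Z_n} -> B) (x : 'Z_n) : B := h (zcoset G x).

(* By the Chinese remainder theorem Z_(p1 p2) is the ring F_p1 x F_p2, and e
   becomes w = (c1, c2) with c_i = g_i^t_i a primitive s_i-th root of unity.  So
   G is cyclic of order L = lcm(s1, s2) = d u1 u2 (u_i = s_i / d), acting by
   multiplication.  Burnside's lemma counts the cosets: w^k fixes
   p1^[s1 | k] p2^[s2 | k] points, and summing over k < L gives
   L (1 + t1 + t2 + d t1 t2).  For a = (b1, b2) <> 0, x + a lies in xG iff
   x (w^k - 1) = a for some k, which is solved componentwise.  If b1, b2 <> 0,
   each k with s1, s2 not dividing k gives exactly one x, and distinct k give
   distinct x: L + 1 - u1 - u2 = a0 solutions.  If b2 = 0, the x with x2 = 0 are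
   the s1 - 1 solutions in F_p1 alone, while x2 <> 0 forces s2 | k, so that only
   the u1 powers of c1^s2 remain: this gives a2, and symmetrically a1. *)

From HB Require Import structures.
From mathcomp Require Import all_boot all_fingroup all_algebra cyclic.
From mathcomp Require Import ring zify.
Set Implicit Arguments. Unset Strict Implicit. Unset Printing Implicit Defensive.
Import GRing.Theory FinRing.Theory Num.Theory.
Local Open Scope ring_scope.

Lemma prim_root_of_order_dvd (R : nzRingType) n (z : R) :
  (0 < n)%N -> (forall k, (z ^+ k == 1) = (n %| k)%N) -> n.-primitive_root z.
Proof.
move=> n_gt0 zE; have /eqP zn1 : z ^+ n == 1 by rewrite zE.
have [m prim_m m_dvd_n] := prim_order_exists n_gt0 zn1.
suff m_eq_n : m = n by rewrite -m_eq_n.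
by apply/eqP; rewrite eqn_dvd m_dvd_n -zE -(prim_order_dvd prim_m) dvdnn.
Qed.

Lemma unit_prim_root (R : finUnitRingType) (u : {unit R}) :
  #[u]%g.-primitive_root (val u).
Proof.
apply: prim_root_of_order_dvd => [|k]; first exact: order_gt0.
by rewrite order_dvdn -val_unitX -val_unit1 (inj_eq val_inj).
Qed.

Lemma gen_unit_exp_prim_root (F : finFieldType) (g : {unit F}) s t :
  <[g]>%g = [set: {unit F}] -> (0 < t)%N -> (s * t = #|F|.-1)%N ->
  s.-primitive_root (val g ^+ t).
Proof.
move=> gen_g t_gt0 st.
have := exp_prim_root (unit_prim_root g) t.
by rewrite orderE gen_g card_finField_unit -st gcdnMl mulnK.
Qed.

Lemma pair_expr (R1 R2 : nzRingType) (y : R1 * R2) k : y ^+ k = (y.1 ^+ k, y.2 ^+ k).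
Proof. by case: y => y1 y2; elim: k => // k IHk; rewrite !exprS IHk. Qed.

Lemma exists_ord_mod (P : pred nat) L s : (0 < s)%N -> (s <= L)%N ->
  (forall k, P (k %% s)%N = P k) -> [exists k : 'I_L, P k] = [exists i : 'I_s, P i].
Proof.
move=> s_gt0 s_le_L P_mod; apply/existsP/existsP => [[k Pk]|[i Pi]].
  by exists (Ordinal (ltn_pmod k s_gt0)); rewrite /= P_mod.
by exists (widen_ord s_le_L i).
Qed.

Lemma exists_ord_dvdn (P : pred nat) L s : (0 < s)%N -> (s %| L)%N ->
  [exists k : 'I_L, (s %| k)%N && P k] = [exists j : 'I_(L %/ s), P (s * j)%N].
Proof.
move=> s_gt0 s_dvd_L; apply/existsP/existsP => [[k /andP[/dvdnP[j k_eq] Pk]]|[j Pj]].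
  have j_lt : (j < L %/ s)%N by rewrite ltn_divRL // -k_eq.
  by exists (Ordinal j_lt); rewrite /= mulnC -k_eq.
have sj_lt : (s * j < L)%N by rewrite mulnC -ltn_divRL.
by exists (Ordinal sj_lt); rewrite /= dvdn_mulr.
Qed.

Lemma card_ord_dvdn L s : (0 < s)%N -> (s %| L)%N ->
  #|[set k : 'I_L | (s %| k)%N]| = (L %/ s)%N.
Proof.
move=> s_gt0 s_dvd_L.
have sj_lt (j : 'I_(L %/ s)) : (s * j < L)%N by rewrite mulnC -ltn_divRL.
have -> : [set k : 'I_L | (s %| k)%N] = [set Ordinal (sj_lt j) | j : 'I_(L %/ s)].
  apply/setP => k; rewrite inE; apply/idP/imsetP => [/dvdnP[j k_eq]|[j _ ->]].
    have j_lt : (j < L %/ s)%N by rewrite ltn_divRL // -k_eq.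
    by exists (Ordinal j_lt); last by apply: val_inj; rewrite /= mulnC.
  exact: dvdn_mulr.
rewrite card_imset ?card_ord // => i j /(congr1 val)/eqP.
by rewrite /= eqn_pmul2l // => /eqP/val_inj.
Qed.

Section LcmCounting.
Variables s1 s2 : nat.
Hypotheses (s1_gt0 : (0 < s1)%N) (s2_gt0 : (0 < s2)%N).
Local Notation L := (lcmn s1 s2).

Let L_gt0 : (0 < L)%N. Proof. by rewrite lcmn_gt0 s1_gt0. Qed.
Let s1_dvd_L : (s1 %| L)%N. Proof. exact: dvdn_lcml. Qed.
Let s2_dvd_L : (s2 %| L)%N. Proof. exact: dvdn_lcmr. Qed.

Lemma card_ord_lcm_ndvdn :
  (#|[set k : 'I_L | ~~ (s1 %| k)%N && ~~ (s2 %| k)%N]| + L %/ s1 + L %/ s2 = L.+1)%N.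
Proof.
set A := [set k : 'I_L | (s1 %| k)%N]; set B := [set k : 'I_L | (s2 %| k)%N].
have -> : [set k : 'I_L | ~~ (s1 %| k)%N && ~~ (s2 %| k)%N] = ~: (A :|: B).
  by apply/setP => k; rewrite !inE negb_or.
have AIB : A :&: B = [set Ordinal L_gt0].
  apply/setP => k; rewrite !inE -dvdn_lcm; apply/idP/eqP => [L_dvd_k|->]; last exact: dvdn0.
  apply: val_inj; apply/eqP; apply: contraTT L_dvd_k; rewrite -lt0n => k_gt0.
  by rewrite gtnNdvd.
have cardA : #|A| = (L %/ s1)%N by apply: card_ord_dvdn.
have cardB : #|B| = (L %/ s2)%N by apply: card_ord_dvdn.
have := cardsUI A B; have := cardsC (A :|: B).
rewrite AIB cards1 cardA cardB card_ord; lia.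
Qed.

Lemma sum_ord_lcm_dvdn P1 P2 : (0 < P1)%N -> (0 < P2)%N ->
  (\sum_(k < L) (if s1 %| k then P1 else 1) * (if s2 %| k then P2 else 1) =
   L + P1.-1 * (L %/ s1) + P2.-1 * (L %/ s2) + P1.-1 * P2.-1)%N.
Proof.
move=> P1_gt0 P2_gt0.
have split_term (k : 'I_L) :
  ((if s1 %| k then P1 else 1) * (if s2 %| k then P2 else 1) =
   1 + (if s1 %| k then P1.-1 else 0) + (if s2 %| k then P2.-1 else 0)
     + (if L %| k then P1.-1 * P2.-1 else 0))%N.
  by rewrite dvdn_lcm; case: (s1 %| k)%N; case: (s2 %| k)%N => /=; nia.
rewrite (eq_bigr _ (fun k _ => split_term k)) !big_split /= -!big_mkcond /=.
rewrite !sum_nat_cond_const -[[set _ | true]]/[set: 'I_L] cardsT card_ord.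
by rewrite !card_ord_dvdn ?divnn ?L_gt0 //; nia.
Qed.

End LcmCounting.

Lemma card_set_swap (T1 T2 : finType) (P : pred (T1 * T2)) :
  #|[set y | P y]| = #|[set z : T2 * T1 | P (z.2, z.1)]|.
Proof.
have swap_inj : injective (fun y : T1 * T2 => (y.2, y.1)) by move=> [? ?] [? ?] [-> ->].
rewrite -(card_imset _ swap_inj); apply: eq_card => -[z2 z1]; rewrite inE.
apply/imsetP/idP => [[[y1 y2] Py [-> ->]] | Pz]; first by rewrite inE in Py.
by exists (z1, z2); rewrite ?inE.
Qed.

Section ShiftEquation.
Variable F : fieldType.

Lemma shift_eq_mul (a x z : F) :
  a != 0 -> (x + a == x * z) = (z != 1) && (x == a / (z - 1)).
Proof.
move=> a_neq0; have [->|z_neq1] /= := eqVneq z 1.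
  by rewrite mulr1 -subr_eq0 addrC addKr (negPf a_neq0).
have z1_neq0 : z - 1 != 0 by rewrite subr_eq0.
rewrite -(can2_eq (mulfK z1_neq0) (divfK z1_neq0)) mulrBr mulr1.
by apply/eqP/eqP => [<-|<-]; [rewrite addrAC subrr add0r | rewrite addrC subrK].
Qed.

Lemma shift0_eq_mul (x z : F) : (x + 0 == x * z) = (x == 0) || (z == 1).
Proof.
by rewrite addr0 -{1}[x]mulr1 eq_sym -subr_eq0 -mulrBr mulf_eq0 subr_eq0.
Qed.

End ShiftEquation.

Lemma card_fix_mul (F : finFieldType) (z : F) :
  #|[set y : F | y * z == y]| = if z == 1 then #|F| else 1%N.
Proof.
have [->|z_neq1] := eqVneq z 1.
  by rewrite -cardsT; apply: eq_card => y; rewrite !inE mulr1 eqxx.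
rewrite -(cards1 (0 : F)); apply: eq_card => y.
by rewrite !inE eq_sym -[y in y == _]addr0 shift0_eq_mul (negPf z_neq1) orbF.
Qed.

Lemma card_shift_prim (F : finFieldType) (c a : F) s :
  s.-primitive_root c -> a != 0 ->
  #|[set x : F | [exists i : 'I_s, x + a == x * c ^+ i]]| = s.-1.
Proof.
move=> c_prim a_neq0; have s_gt0 := prim_order_gt0 c_prim.
have expc_eq (i j : 'I_s) : (c ^+ i == c ^+ j) = (i == j).
  by rewrite (eq_prim_root_expr c_prim) !modn_small.
have expc_eq1 (i : 'I_s) : (c ^+ i == 1) = (i == Ordinal s_gt0).
  by rewrite -expc_eq expr0.
pose sol (i : 'I_s) := a / (c ^+ i - 1).
have -> : [set x | [exists i : 'I_s, x + a == x * c ^+ i]] =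
          sol @: [set~ Ordinal s_gt0].
  apply/setP => x; rewrite inE; apply/existsP/imsetP => [[i]|[i]].
    by rewrite shift_eq_mul // expc_eq1 => /andP[i_neq0 /eqP->]; exists i; rewrite ?inE.
  by rewrite !inE => i_neq0 ->; exists i; rewrite shift_eq_mul // expc_eq1 i_neq0 /=.
rewrite card_in_imset ?cardsC1 ?card_ord // => i j _ _ /(mulfI a_neq0)/invr_inj/addIr/eqP.
by rewrite expc_eq => /eqP.
Qed.

Section PrimitiveRootPair.
Variables (F1 F2 : finFieldType) (s1 s2 : nat) (c1 : F1) (c2 : F2).
Hypotheses (c1_prim : s1.-primitive_root c1) (c2_prim : s2.-primitive_root c2).
Local Notation L := (lcmn s1 s2).
Local Notation w := ((c1, c2) : F1 * F2).

Let s1_gt0 := prim_order_gt0 c1_prim.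
Let s2_gt0 := prim_order_gt0 c2_prim.
Let L_gt0 : (0 < L)%N. Proof. by rewrite lcmn_gt0 s1_gt0. Qed.

Lemma pair_prim_root : L.-primitive_root w.
Proof.
apply: prim_root_of_order_dvd => [|k] //.
by rewrite pair_expr xpair_eqE -(prim_order_dvd c1_prim) -(prim_order_dvd c2_prim) dvdn_lcm.
Qed.

Lemma card_fix_mul_pair k :
  #|[set y : F1 * F2 | y * w ^+ k == y]| =
    ((if s1 %| k then #|F1| else 1) * (if s2 %| k then #|F2| else 1))%N.
Proof.
have -> : [set y : F1 * F2 | y * w ^+ k == y] =
          setX [set y1 | y1 * c1 ^+ k == y1] [set y2 | y2 * c2 ^+ k == y2].
  by apply/setP => -[y1 y2]; rewrite !inE pair_expr xpair_eqE.
by rewrite cardsX !card_fix_mul -(prim_order_dvd c1_prim) -(prim_order_dvd c2_prim).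
Qed.

Lemma card_shift_pair_neq0 (b : F1 * F2) : b.1 != 0 -> b.2 != 0 ->
  #|[set y : F1 * F2 | [exists k : 'I_L, y + b == y * w ^+ k]]| =
  #|[set k : 'I_L | ~~ (s1 %| k)%N && ~~ (s2 %| k)%N]|.
Proof.
case: b => b1 b2 /= b1_neq0 b2_neq0.
pose sol (k : 'I_L) := (b1 / (c1 ^+ k - 1), b2 / (c2 ^+ k - 1)).
have shiftE (y : F1 * F2) (k : 'I_L) : (y + (b1, b2) == y * w ^+ k) =
    [&& c1 ^+ k != 1, c2 ^+ k != 1 & y == sol k].
  case: y => y1 y2; rewrite pair_expr xpair_eqE !shift_eq_mul // xpair_eqE.
  by rewrite andbACA -andbA.
have -> : [set y : F1 * F2 | [exists k : 'I_L, y + (b1, b2) == y * w ^+ k]] =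
          sol @: [set k : 'I_L | ~~ (s1 %| k)%N && ~~ (s2 %| k)%N].
  apply/setP => y; rewrite inE; apply/existsP/imsetP => [[k]|[k]].
    rewrite shiftE => /and3P[c1k c2k /eqP->]; exists k => //.
    by rewrite inE (prim_order_dvd c1_prim) (prim_order_dvd c2_prim) c1k.
  rewrite inE (prim_order_dvd c1_prim) (prim_order_dvd c2_prim) => c12k ->.
  by exists k; rewrite shiftE eqxx andbT.
apply: card_in_imset => i j _ _ [/(mulfI b1_neq0)/invr_inj/addIr/eqP e1].
move=> /(mulfI b2_neq0)/invr_inj/addIr/eqP e2; apply: val_inj; apply/eqP.
have : (w ^+ i == w ^+ j) by rewrite !pair_expr xpair_eqE e1 e2.
by rewrite (eq_prim_root_expr pair_prim_root) !modn_small.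
Qed.

Lemma expr_lcm_prim_root : (L %/ s2).-primitive_root (c1 ^+ s2).
Proof.
apply: prim_root_of_order_dvd => [|j]; first by rewrite divn_gt0 // dvdn_leq ?dvdn_lcmr.
rewrite -exprM -(prim_order_dvd c1_prim) -(@dvdn_pmul2r s2 (L %/ s2)%N) //.
by rewrite divnK ?dvdn_lcmr // dvdn_lcm (dvdn_mull j (dvdnn s2)) andbT mulnC.
Qed.

Lemma card_shift_pair_eq0r (b1 : F1) : b1 != 0 ->
  #|[set y : F1 * F2 | [exists k : 'I_L, y + (b1, 0) == y * w ^+ k]]| =
  (s1.-1 + #|F2|.-1 * (L %/ s2).-1)%N.
Proof.
move=> b1_neq0; pose P x k := x + b1 == x * c1 ^+ k.
have shiftE (y : F1 * F2) k :
    (y + (b1, 0) == y * w ^+ k) = P y.1 k && ((y.2 == 0) || (s2 %| k)%N).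
  by case: y => y1 y2; rewrite pair_expr xpair_eqE shift0_eq_mul (prim_order_dvd c2_prim).
set X1 := [set x : F1 | [exists i : 'I_s1, P x i]].
set X2 := [set x : F1 | [exists j : 'I_(L %/ s2), x + b1 == x * (c1 ^+ s2) ^+ j]].
have -> : [set y : F1 * F2 | [exists k : 'I_L, y + (b1, 0) == y * w ^+ k]] =
          setX X1 [set 0] :|: setX X2 [set~ 0].
  apply/setP => -[y1 y2]; rewrite !inE /=.
  have [-> | y2_neq0] := eqVneq y2 0; rewrite ?eqxx ?andbT ?andbF ?orbF /=.
    under eq_existsb => k do rewrite shiftE /= eqxx andbT.
    rewrite (@exists_ord_mod (P y1) L s1) // => [|k]; first by rewrite dvdn_leq ?dvdn_lcml.
    by rewrite /P (prim_expr_mod c1_prim).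
  under eq_existsb => k do rewrite shiftE /= (negPf y2_neq0) andbC.
  by rewrite exists_ord_dvdn ?dvdn_lcmr //; under eq_existsb => j do rewrite /P exprM.
rewrite cardsU !cardsX cards1 cardsC1.
have -> : setX X1 [set 0 : F2] :&: setX X2 [set~ 0] = set0.
  by apply/setP => -[y1 y2]; rewrite !inE /=; case: eqP; rewrite ?andbF.
rewrite cards0 subn0 (card_shift_prim c1_prim) // (card_shift_prim expr_lcm_prim_root) //.
by rewrite muln1 mulnC.
Qed.

End PrimitiveRootPair.

Lemma card_shift_pair (F1 F2 : finFieldType) s1 s2 (c1 : F1) (c2 : F2) (b : F1 * F2) :
  s1.-primitive_root c1 -> s2.-primitive_root c2 -> b != 0 ->
  let L := lcmn s1 s2 in
  let N := #|[set y : F1 * F2 | [exists k : 'I_L, y + b == y * (c1, c2) ^+ k]]| in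
  [\/ N + L %/ s1 + L %/ s2 = L.+1,
      N = s1.-1 + #|F2|.-1 * (L %/ s2).-1 |
      N = s2.-1 + #|F1|.-1 * (L %/ s1).-1]%N.
Proof.
move=> c1_prim c2_prim; case: b => b1 b2 b_neq0 L N.
have [b1_0 | b1_neq0] := eqVneq b1 0; last have [b2_0 | b2_neq0] := eqVneq b2 0.
- apply: Or33; move: b_neq0; rewrite b1_0 xpair_eqE eqxx /= => b2_neq0.
  rewrite /N /L card_set_swap lcmnC -(card_shift_pair_eq0r c2_prim c1_prim b2_neq0).
  apply: eq_card => z; rewrite !inE; apply: eq_existsb => k.
  by rewrite !pair_expr !xpair_eqE /= b1_0 andbC.
- by apply: Or32; rewrite /N b2_0 card_shift_pair_eq0r.
- apply: Or31; rewrite /N card_shift_pair_neq0 //.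
  exact: card_ord_lcm_ndvdn (prim_order_gt0 c1_prim) (prim_order_gt0 c2_prim).
Qed.

Section UnitMulAction.
Variable R : finUnitRingType.

Definition unit_mul (x : R) (u : {unit R}) := x * val u.

Lemma unit_mul1 : unit_mul^~ 1%g =1 id.
Proof. by move=> x; rewrite /unit_mul val_unit1 mulr1. Qed.

Lemma unit_mulM x : act_morph unit_mul x.
Proof. by move=> u v; rewrite /unit_mul val_unitM mulrA. Qed.

Definition unit_mul_action := TotalAction unit_mul1 unit_mulM.

Lemma orbit_unit_mul_cycle (u : {unit R}) x y :
  (y \in orbit unit_mul_action <[u]> x) = [exists k : 'I_#[u]%g, y == x * val u ^+ k].
Proof.
apply/imsetP/existsP => [[v /cyclePmin[k k_lt ->] ->]|[k /eqP->]].
  by exists (Ordinal k_lt); rewrite /= /unit_mul val_unitX.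
by exists (u ^+ k)%g; rewrite ?mem_cycle //= /unit_mul val_unitX.
Qed.

Lemma card_orbits_unit_mul_cycle (u : {unit R}) :
  (#|orbit unit_mul_action <[u]> @: setT| * #[u]%g)%N =
  \sum_(k < #[u]%g) #|[set x : R | x * val u ^+ k == x]|.
Proof.
have acts_u : [acts <[u]>%g, on [set: R] | unit_mul_action].
  by apply/actsP => v _ x; rewrite !inE.
have cycleE : <[u]>%G :=: [set (u ^+ k)%g | k : 'I_#[u]%g].
  apply/setP => v; apply/idP/imsetP => [/cyclePmin[k k_lt ->]|[k _ ->]].
    by exists (Ordinal k_lt).
  exact: mem_cycle.
rewrite [in LHS]orderE -(Frobenius_Cauchy acts_u) cycleE big_imset /=.
  apply: eq_bigr => k _; apply: eq_card => x.
  by rewrite setTI !inE sub1set inE /= /unit_mul val_unitX.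
move=> i j _ _ /eqP; rewrite eq_expg_mod_order !modn_small //.
by move=> /eqP/val_inj.
Qed.

End UnitMulAction.

Section CosetIndex.
Variable n : nat.
Implicit Type G : {set {unit 'Z_n}}.

Lemma zcosetE G x : zcoset G x = orbit (unit_mul_action _) G x.
Proof. by []. Qed.

Lemma zcosetsE G : zcosets G = orbit (unit_mul_action _) G @: setT.
Proof. by apply/setP => X; apply/imsetP/imsetP => -[x _ ->]; exists x. Qed.

Lemma zcoset_shift_eq (G : {group {unit 'Z_n}}) x a :
  (zcoset G (x + a) == zcoset G x) = (x + a \in orbit (unit_mul_action _) G x).
Proof. by rewrite !zcosetE; apply/eqP/idP => [<-|/orbit_eqP//]; exact: orbit_refl. Qed.

Variables (B : finType) (h : {set 'Z_n} -> B).

Lemma card_coset_index_image G : {in zcosets G &, injective h} ->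
  #|[set coset_index_fun G h x | x : 'Z_n]| = #|zcosets G|.
Proof.
move=> h_inj; rewrite -(card_in_imset h_inj); apply: eq_card => y.
apply/imsetP/imsetP => [[x _ ->]|[_ /imsetP[x _ ->] ->]].
  by exists (zcoset G x); rewrite ?imset_f.
by exists x.
Qed.

Lemma coset_index_shift G a : {in zcosets G &, injective h} ->
  [set x | coset_index_fun G h (x + a) == coset_index_fun G h x] =
  [set x | zcoset G (x + a) == zcoset G x].
Proof.
by move=> h_inj; apply/setP => x; rewrite !inE (inj_in_eq h_inj) ?imset_f.
Qed.

End CosetIndex.

Definition redFp p m (x : 'Z_m) : 'F_p := (x : nat)%:R.
Arguments redFp p {m} x.

Section ReductionModPrime.
Variables p m : nat.
Hypotheses (p_pr : prime p) (p_dvd_m : (p %| m)%N) (m_gt1 : (1 < m)%N).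

Lemma redFp_nat k : redFp p (k%:R : 'Z_m) = k%:R.
Proof. by rewrite /redFp val_Zp_nat // -(Fp_nat_mod p_pr) modn_dvdm // Fp_nat_mod. Qed.

Lemma redFp_is_nmod_morphism : nmod_morphism (redFp p : 'Z_m -> 'F_p).
Proof.
split=> [|x y]; first exact: (redFp_nat 0).
by rewrite -[x]natr_Zp -[y]natr_Zp -natrD !redFp_nat natrD.
Qed.

Lemma redFp_is_monoid_morphism : monoid_morphism (redFp p : 'Z_m -> 'F_p).
Proof.
split=> [|x y]; first exact: (redFp_nat 1).
by rewrite -[x]natr_Zp -[y]natr_Zp -natrM !redFp_nat natrM.
Qed.

HB.instance Definition _ := GRing.isNmodMorphism.Build _ _ (redFp p : 'Z_m -> 'F_p)
  redFp_is_nmod_morphism.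
HB.instance Definition _ := GRing.isMonoidMorphism.Build _ _ (redFp p : 'Z_m -> 'F_p)
  redFp_is_monoid_morphism.

Lemma redFp_eq (x y : 'Z_m) : (redFp p x == redFp p y) = (x == y %[mod p])%N.
Proof.
apply/eqP/eqP => [/(congr1 val)|xy]; first by rewrite /= !val_Fp_nat.
by rewrite /redFp -(Fp_nat_mod p_pr) xy Fp_nat_mod.
Qed.

End ReductionModPrime.

Definition crt p1 p2 (x : 'Z_(p1 * p2)) : 'F_p1 * 'F_p2 := (redFp p1 x, redFp p2 x).

Section ChineseRemainder.
Variables p1 p2 : nat.
Hypotheses (p1_pr : prime p1) (p2_pr : prime p2) (p1_neq_p2 : p1 != p2).
Local Notation n := (p1 * p2)%N.

Let n_gt1 : (1 < n)%N.
Proof. by rewrite (@ltn_mul 1 1) ?prime_gt1. Qed.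
Let p1_dvd_n : (p1 %| n)%N. Proof. exact: dvdn_mulr. Qed.
Let p2_dvd_n : (p2 %| n)%N. Proof. exact: dvdn_mull. Qed.
Local Notation crt := (@crt p1 p2).

(* The side conditions of the [redFp] morphism instances are discharged by the
   [Let]s above. *)
Lemma crt_is_nmod_morphism : nmod_morphism crt.
Proof. by split=> [|x y]; rewrite /crt ?rmorph0 ?rmorphD. Qed.

Lemma crt_is_monoid_morphism : monoid_morphism crt.
Proof. by split=> [|x y]; rewrite /crt ?rmorph1 ?rmorphM. Qed.

HB.instance Definition _ := GRing.isNmodMorphism.Build _ _ crt
  crt_is_nmod_morphism.
HB.instance Definition _ := GRing.isMonoidMorphism.Build _ _ crt
  crt_is_monoid_morphism.

Lemma crt_int (z : int) : crt (z%:~R : 'Z_n) = (z%:~R, z%:~R).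
Proof. by rewrite /crt !rmorph_int. Qed.

Lemma crt_inj : injective crt.
Proof.
move=> x y [/eqP x1y /eqP x2y]; apply: val_inj.
have co_p12 : coprime p1 p2 by rewrite prime_coprime // dvdn_prime2.
move: x1y x2y; rewrite !redFp_eq // => x1y x2y.
have lt_n (z : 'Z_n) : (z < n)%N by rewrite -[X in (_ < X)%N](Zp_cast n_gt1).
have /eqP := chinese_remainder co_p12 x y; rewrite x1y x2y => /eqP.
by rewrite !modn_small ?lt_n // => /eqP.
Qed.

Lemma crt_eq0 x : (crt x == 0) = (x == 0).
Proof. by rewrite -(rmorph0 crt) (inj_eq crt_inj). Qed.

Lemma crt_bij : bijective crt.
Proof. by apply: inj_card_bij crt_inj _; rewrite card_prod !card_Fp // card_ord Zp_cast. Qed.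

Lemma card_crt_preim (P : pred ('F_p1 * 'F_p2)) :
  #|[set x | P (crt x)]| = #|[set y | P y]|.
Proof.
have [crtV crtK crtVK] := crt_bij.
rewrite -(card_imset _ crt_inj); apply: eq_card => y; rewrite inE.
by apply/imsetP/idP => [[x /[!inE] Px ->] // | Py]; exists (crtV y); rewrite ?inE crtVK.
Qed.

Section CyclicSubgroup.
Variables (s1 s2 : nat) (c1 : 'F_p1) (c2 : 'F_p2) (c : 'Z_n).
Hypotheses (c1_prim : s1.-primitive_root c1) (c2_prim : s2.-primitive_root c2).
Hypothesis crt_c : crt c = (c1, c2).
Local Notation L := (lcmn s1 s2).
Local Notation G := (gen_units c).

Lemma crt_expr_eq1 k : (c ^+ k == 1) = (L %| k)%N.
Proof.
rewrite -(inj_eq crt_inj) rmorphXn rmorph1 /= crt_c.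
by rewrite -(prim_order_dvd (pair_prim_root c1_prim c2_prim)).
Qed.

Lemma crt_unit : c \is a GRing.unit.
Proof.
have L_gt0 : (0 < L)%N by rewrite lcmn_gt0 (prim_order_gt0 c1_prim) (prim_order_gt0 c2_prim).
have cL1 : c ^+ L = 1 by apply/eqP; rewrite crt_expr_eq1.
by rewrite -(unitrX_pos _ L_gt0) cL1 unitr1.
Qed.

Lemma val_unit_of_crt : val (unit_of c) = c.
Proof. by rewrite /unit_of insubdK ?crt_unit. Qed.

Lemma order_unit_of_crt : #[unit_of c]%g = L.
Proof.
have u_prim := unit_prim_root (unit_of c); rewrite val_unit_of_crt in u_prim.
apply/eqP; rewrite eqn_dvd (prim_order_dvd u_prim) -crt_expr_eq1.
by rewrite (prim_expr_order u_prim) eqxx crt_expr_eq1 dvdnn.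
Qed.

Lemma card_zcosets_crt :
  (#|zcosets G| * L = L + p1.-1 * (L %/ s1) + p2.-1 * (L %/ s2) + p1.-1 * p2.-1)%N.
Proof.
rewrite zcosetsE -[in LHS]order_unit_of_crt card_orbits_unit_mul_cycle order_unit_of_crt.
have fixE (k : 'I_L) : #|[set x : 'Z_n | x * val (unit_of c) ^+ k == x]| =
    ((if s1 %| k then #|'F_p1| else 1) * (if s2 %| k then #|'F_p2| else 1))%N.
  rewrite -(card_fix_mul_pair c1_prim c2_prim) -card_crt_preim; apply: eq_card => x.
  by rewrite !inE val_unit_of_crt -(inj_eq crt_inj) rmorphM rmorphXn /= crt_c.
rewrite (eq_bigr _ (fun k _ => fixE k)).
by rewrite sum_ord_lcm_dvdn ?(prim_order_gt0 c1_prim) ?(prim_order_gt0 c2_prim) ?card_Fp ?prime_gt0.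
Qed.

Lemma card_zcoset_shift_crt a :
  #|[set x | zcoset G (x + a) == zcoset G x]| =
  #|[set y : 'F_p1 * 'F_p2 | [exists k : 'I_L, y + crt a == y * (c1, c2) ^+ k]]|.
Proof.
rewrite -card_crt_preim; apply: eq_card => x.
rewrite !inE zcoset_shift_eq orbit_unit_mul_cycle order_unit_of_crt val_unit_of_crt.
by apply: eq_existsb => k; rewrite -(inj_eq crt_inj) rmorphD rmorphM rmorphXn /= crt_c.
Qed.

End CyclicSubgroup.

End ChineseRemainder.

Lemma lcmn_gcdn_split s1 s2 : (0 < s1)%N -> (0 < s2)%N ->
  exists u1 u2, [/\ s1 = gcdn s1 s2 * u1, s2 = gcdn s1 s2 * u2,
                   lcmn s1 s2 %/ s1 = u2, lcmn s1 s2 %/ s2 = u1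
                 & lcmn s1 s2 = gcdn s1 s2 * u1 * u2]%N.
Proof.
move=> s1_gt0 s2_gt0; set d := gcdn s1 s2.
have d_gt0 : (0 < d)%N by rewrite gcdn_gt0 s1_gt0.
have s1E : s1 = (d * (s1 %/ d))%N by rewrite mulnC divnK ?dvdn_gcdl.
have s2E : s2 = (d * (s2 %/ d))%N by rewrite mulnC divnK ?dvdn_gcdr.
have LE : lcmn s1 s2 = (d * (s1 %/ d) * (s2 %/ d))%N.
  apply/eqP; rewrite -(eqn_pmul2r d_gt0) muln_lcm_gcd -/d {1}s1E {1}s2E.
  by apply/eqP; ring.
exists (s1 %/ d)%N, (s2 %/ d)%N; split=> //; rewrite LE.
  by rewrite {2}s1E mulKn // -s1E.
by rewrite mulnAC {2}s2E mulKn // -s2E.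
Qed.

Lemma card_cosets_arith m p1 p2 s1 t1 s2 t2 :
  (0 < s1)%N -> (0 < s2)%N -> (s1 * t1 = p1.-1)%N -> (s2 * t2 = p2.-1)%N ->
  let L := lcmn s1 s2 in
  (m * L = L + p1.-1 * (L %/ s1) + p2.-1 * (L %/ s2) + p1.-1 * p2.-1)%N ->
  m = (1 + t1 + t2 + gcdn s1 s2 * t1 * t2)%N.
Proof.
move=> s1_gt0 s2_gt0 <- <- L; rewrite {}/L.
have [u1 [u2 [s1E s2E -> -> ->]]] := lcmn_gcdn_split s1_gt0 s2_gt0.
move: (gcdn s1 s2) s1E s2E s1_gt0 s2_gt0 => d -> ->.
rewrite !muln_gt0 => /andP[d_gt0 u1_gt0] /andP[_ u2_gt0] mE.
apply/eqP; rewrite -(@eqn_pmul2r (d * u1 * u2)) ?muln_gt0 ?d_gt0 ?u1_gt0 // mE.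
by apply/eqP; ring.
Qed.

Lemma axis_count_ratE N p d u : (0 < d)%N -> (0 < u)%N -> (0 < p)%N ->
  N = ((d * u).-1 + p.-1 * u.-1)%N ->
  N%:Q = (p.-1)%:Q * (d * u)%:Q / d%:Q - p%:Q + (d * u)%:Q.
Proof.
move=> d_gt0 u_gt0 p_gt0 NE.
have NE' : (N + p + u = d * u + p * u)%N by rewrite NE; nia.
have dQ : d%:R != 0 :> rat by rewrite pnatr_eq0 -lt0n.
have natQ (k : nat) : k%:Q = k%:R by [].
have NQ : N%:R = (d * u)%:R + p%:R * u%:R - p%:R - u%:R :> rat.
  by rewrite -natrM -natrD -NE' !natrD; ring.
by rewrite !natQ NQ -(subn1 p) natrB // !natrM; field.
Qed.

Lemma zero_diff_count_arith N p1 p2 s1 s2 :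
  (0 < s1)%N -> (0 < s2)%N -> (0 < p1)%N -> (0 < p2)%N ->
  let L := lcmn s1 s2 in
  [\/ N + L %/ s1 + L %/ s2 = L.+1,
      N = s1.-1 + p2.-1 * (L %/ s2).-1 |
      N = s2.-1 + p1.-1 * (L %/ s1).-1]%N ->
  let d := gcdn s1 s2 in
  N%:Q \in [:: (s1%:Q * s2%:Q - s1%:Q - s2%:Q) / d%:Q + 1;
              (p1.-1)%:Q * s2%:Q / d%:Q - p1%:Q + s2%:Q;
              (p2.-1)%:Q * s1%:Q / d%:Q - p2%:Q + s1%:Q].
Proof.
move=> s1_gt0 s2_gt0 p1_gt0 p2_gt0 L; rewrite {}/L.
have [u1 [u2 [s1E s2E -> -> ->]]] := lcmn_gcdn_split s1_gt0 s2_gt0.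
move: (gcdn s1 s2) s1E s2E s1_gt0 s2_gt0 => d -> ->.
rewrite !muln_gt0 => /andP[d_gt0 u1_gt0] /andP[_ u2_gt0] [NE|NE|NE]; rewrite !inE.
- have dQ : d%:R != 0 :> rat by rewrite pnatr_eq0 -lt0n.
  have natQ (k : nat) : k%:Q = k%:R by [].
  have NQ : N%:R = (d * u1 * u2)%:R + 1 - u1%:R - u2%:R :> rat.
    by rewrite natr1 -NE !natrD; ring.
  by rewrite !natQ NQ !natrM; apply/orP; left; apply/eqP; field.
- by rewrite (axis_count_ratE d_gt0 u1_gt0 p2_gt0 NE) eqxx !orbT.
- by rewrite (axis_count_ratE d_gt0 u2_gt0 p1_gt0 NE) eqxx orbT.
Qed.

Theorem theorem3p10 (p1 p2 s1 t1 s2 t2 : nat)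
    (g1 : {unit 'F_p1}) (g2 : {unit 'F_p2}) (e : int) :
  prime p1 -> prime p2 -> p1 != p2 ->
  (0 < s1)%N -> (0 < t1)%N -> (0 < s2)%N -> (0 < t2)%N ->
  (s1 * t1 = p1.-1)%N -> (s2 * t2 = p2.-1)%N ->
  <[g1]>%g = [set: {unit 'F_p1}] -> <[g2]>%g = [set: {unit 'F_p2}] ->
  (e%:~R : 'F_p1) = (val g1) ^+ t1 ->
  (e%:~R : 'F_p2) = (val g2) ^+ t2 ->
  let d := gcdn s1 s2 in
  let a0 : rat := (s1%:Q * s2%:Q - s1%:Q - s2%:Q) / d%:Q + 1 in
  let a1 : rat := (p1.-1)%:Q * s2%:Q / d%:Q - p1%:Q + s2%:Q in
  let a2 : rat := (p2.-1)%:Q * s1%:Q / d%:Q - p2%:Q + s1%:Q in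
  let G := gen_units (e%:~R : 'Z_(p1 * p2)) in
  forall h : {set 'Z_(p1 * p2)} -> 'Z_#|zcosets G|,
    {in zcosets G &, injective h} -> h @: zcosets G = setT ->
    zero_difference (coset_index_fun G h) (p1 * p2)
      (1 + t1 + t2 + d * t1 * t2)%N
      (fun k => k%:Q \in [:: a0; a1; a2]).
Proof.
move=> p1_pr p2_pr p1_neq_p2 s1_gt0 t1_gt0 s2_gt0 t2_gt0 st1 st2 gen1 gen2 e1 e2.
move=> d a0 a1 a2 G h h_inj _.
have c1_prim : s1.-primitive_root (val g1 ^+ t1).
  by apply: gen_unit_exp_prim_root; rewrite ?card_Fp.
have c2_prim : s2.-primitive_root (val g2 ^+ t2).
  by apply: gen_unit_exp_prim_root; rewrite ?card_Fp.
have crt_e : crt (e%:~R : 'Z_(p1 * p2)) = (val g1 ^+ t1, val g2 ^+ t2).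
  by rewrite crt_int // e1 e2.
have cosetsE := card_zcosets_crt p1_pr p2_pr p1_neq_p2 c1_prim c2_prim crt_e.
have shiftE := card_zcoset_shift_crt p1_pr p2_pr p1_neq_p2 c1_prim c2_prim crt_e.
split.
- by rewrite card_ord Zp_cast // (@ltn_mul 1 1) ?prime_gt1.
- by rewrite card_coset_index_image // (card_cosets_arith s1_gt0 s2_gt0 st1 st2 cosetsE).
move=> a a_neq0; rewrite coset_index_shift // shiftE.
have crt_a_neq0 : crt a != 0 by rewrite crt_eq0.
have := card_shift_pair c1_prim c2_prim crt_a_neq0; rewrite /= !card_Fp //.
by apply: zero_diff_count_arith; rewrite ?(prime_gt0 p1_pr) ?(prime_gt0 p2_pr).
Qed.
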